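(* Let $X$ be a locally compact Hausdorff space. If $X$ contains an open dense $\sigma$-compact set and $C_0(X)$ has the countable sup property, then $X$ is CCC.
   Context: $C_0(X)$ is the vector lattice (pointwise order) of continuous real-valued functions on $X$ vanishing at infinity. A vector lattice has the countable sup property if every nonempty subset possessing a supremum contains a countable subset with the same supremum. $X$ is CCC if every family of pairwise disjoint open subsets of $X$ is countable. *)

From HB Require Import structures.
From mathcomp Require Import all_boot all_order all_algebra.
From mathcomp Require Import all_classical all_reals all_analysis.
Unset Printing Implicit Defensive.
Import Order.TTheory GRing.Theory Num.Theory.
Import numFieldNormedType.Exports.
Local Open Scope classical_set_scope.
Local Open Scope ring_scope.

(* C_0(X): continuous real functions vanishing at infinity, i.e. for every
   eps > 0 the set {x | |f x| >= eps} is compact. *)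
Definition C0 (R : realType) (X : topologicalType) : set (X -> R) :=
  [set f | continuous f /\
           forall eps : R, 0 < eps -> compact [set x | eps <= `|f x|]].

Definition fle (R : realType) (X : Type) (f g : X -> R) : Prop :=
  forall x, f x <= g x.

Definition is_sup_C0 (R : realType) (X : topologicalType)
    (S : set (X -> R)) (g : X -> R) : Prop :=
  C0 R X g /\ (forall f, S f -> fle R X f g) /\
  (forall h, C0 R X h -> (forall f, S f -> fle R X f h) -> fle R X g h).

Definition C0_countable_sup_property (R : realType) (X : topologicalType) : Prop :=
  forall (S : set (X -> R)) (g : X -> R),
    S `<=` C0 R X -> S !=set0 -> is_sup_C0 R X S g ->
    exists S' : set (X -> R), [/\ S' `<=` S, countable S' & is_sup_C0 R X S' g].

Definition sigma_compact (X : topologicalType) (A : set X) : Prop :=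
  exists K : nat -> set X, (forall n, compact (K n)) /\ A = \bigcup_n K n.

Definition CCC (X : topologicalType) : Prop :=
  forall F : set (set X),
    (forall U, F U -> open U) ->
    (forall U V, F U -> F V -> U <> V -> U `&` V = set0) ->
    countable F.

From mathcomp Require Import all_boot all_order all_algebra.
From mathcomp Require Import all_classical all_reals all_analysis.
Import Order.TTheory GRing.Theory Num.Theory.
Import numFieldNormedType.Exports.
Local Open Scope classical_set_scope.
Local Open Scope ring_scope.

(* Let F be an uncountable family of pairwise disjoint open sets; adding the
   complement of the closure of its union, we may assume that its union is
   dense.  The dense set D is the union of countably many compact sets K_n,
   so uncountably many members of F meet a single K_n.  Let g in C_0(X) be
   1 on K_n.  By density of the union of F, g is the supremum of the
   functions of C_0(X) below g that are supported in a single member of F.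
   A countable subfamily only sees countably many members of F, so some
   member U meets K_n at a point x0 while every function of the subfamily
   vanishes on U.  With psi an Urysohn function for x0 inside U,
   g (1 - psi) is then a smaller upper bound of the subfamily, since it
   vanishes at x0. *)

Lemma countableU T (A B : set T) : countable A -> countable B -> countable (A `|` B).
Proof.
move=> cA cB.
have -> : A `|` B = \bigcup_(b in [set: bool]) (if b then A else B).
  apply/seteqP; split => x; first by case => ?; [exists true | exists false].
  by case => -[] _ ?; [left | right].
by apply: bigcup_countable => // -[].
Qed.

Section C0_functions.
Context {R : realType} {X : topologicalType}.

Lemma closed_norm_ge {T : topologicalType} (f : T -> R) (eps : R) :
  continuous f -> closed [set x | eps <= `|f x|].
Proof.
move=> cf; have cnf : continuous (fun x => `|f x|).
  by move=> x; apply: continuous_comp; [exact: cf | exact: norm_continuous].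
exact: (proj1 (continuous_closedP _) cnf _ (@closed_ge R eps)).
Qed.

Lemma C0_dominated (g f : X -> R) :
  C0 R X g -> continuous f -> (forall x, `|f x| <= `|g x|) -> C0 R X f.
Proof.
move=> [_ cpt_g] cf fg; split => // eps eps_gt0.
apply: (subclosed_compact (closed_norm_ge _ eps cf) (cpt_g eps eps_gt0)).
by move=> x /= /le_trans; apply.
Qed.

Lemma C0_mul_unit_interval (g p : X -> R) :
  C0 R X g -> continuous p -> (forall x, 0 <= p x <= 1) ->
  C0 R X (fun x => g x * p x).
Proof.
move=> C0g cp p01; apply: (C0_dominated _ _ C0g).
  by move=> x; apply: continuousM; [exact: (proj1 C0g) | exact: cp].
move=> x; have /andP[p_ge0 p_le1] := p01 x.
by rewrite normrM (ger0_norm p_ge0) ler_piMr.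
Qed.

Lemma C0_one_point_compactification (f : one_point_compactification X -> R) :
  continuous f -> f None = 0 -> C0 R X (f \o Some).
Proof.
move=> cf f_inf; split.
  move=> x; apply: continuous_comp; last exact: cf.
  exact: one_point_compactification_some_continuous.
move=> eps eps_gt0.
pose C : set (one_point_compactification X) := [set y | eps <= `|f y|].
have clC : closed C := closed_norm_ge _ eps cf.
have : @nbhs _ (one_point_compactification X) None (~` C).
  apply: open_nbhs_nbhs; split; first exact: closed_openC.
  by rewrite /C /= f_inf normr0 leNgt eps_gt0.
case=> Q [cptQ clQ] QC; apply: (subclosed_compact _ cptQ).
  exact: (proj1 (continuous_closedP _) one_point_compactification_some_continuous _ clC).
move=> x Cx; apply: contrapT => nQx.
by apply: (QC (Some x)) => //; left; exists x.
Qed.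

End C0_functions.

Lemma C0_urysohn (R : realType) {X : topologicalType} {K W : set X} :
  hausdorff_space X -> locally_compact [set: X] ->
  compact K -> open W -> K `<=` W ->
  exists phi : X -> R, [/\ C0 R X phi, (forall x, 0 <= phi x <= 1),
    (forall x, K x -> phi x = 1) & (forall x, ~ W x -> phi x = 0)].
Proof.
move=> hX lcX cptK oW KW.
pose Y := one_point_compactification X.
have nY : normal_space Y.
  apply: compact_normal; last exact: one_point_compactification_compact.
  exact: one_point_compactification_hausdorff.
pose A : set Y := ~` (Some @` W).
pose B : set Y := Some @` K.
have clA : closed A.
  by apply: open_closedC; exact: one_point_compactification_open_some.
have clB : closed B.
  apply: compact_closed; first exact: one_point_compactification_hausdorff.
  apply: continuous_compact cptK; apply: continuous_subspaceT.
  exact: one_point_compactification_some_continuous.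
have AB0 : A `&` B = set0.
  by apply/seteqP; split => // y [Ay [x Kx xy]]; apply: Ay; exists x => //; exact: KW.
have /(uniform_separatorP (R := R)) [f [cf f01 fA fB]] :=
  proj1 (normal_separatorP (R := R)) nY A B clA clB AB0.
have f_inf : f None = 0 by apply: fA; exists None => //; case.
exists (f \o Some); split.
- exact: C0_one_point_compactification.
- by move=> x; have := f01 _ (imageT f (Some x)); rewrite /= in_itv.
- by move=> x Kx; apply: fB; exists (Some x) => //; exists x.
- by move=> x Wx; apply: fA; exists (Some x) => // -[y Wy [yx]]; apply: Wx; rewrite -yx.
Qed.

Section open_families.
Context {X : topologicalType}.

Lemma open_family_dense_extension {F : set (set X)} :
  (forall U, F U -> open U) -> trivIset F id ->
  exists F1 : set (set X), [/\ F `<=` F1, (forall U, F1 U -> open U),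
    trivIset F1 id & dense (\bigcup_(U in F1) U)].
Proof.
move=> oF trivF; pose E := ~` closure (\bigcup_(U in F) U).
have FE0 U : F U -> U `&` E = set0.
  by move=> FU; apply/seteqP; split => // x [Ux]; apply; apply: subset_closure; exists U.
exists (F `|` [set E]); split.
- by move=> U; left.
- by move=> U [/oF // | ->]; apply: closed_openC; exact: closed_closure.
- move=> U V [FU | ->] [FV | ->] // UV; first exact: trivF.
  + by move: UV; rewrite FE0 // => -[].
  + by move: UV; rewrite setIC FE0 // => -[].
- move=> O [x Ox] oO.
  have [[y [Oy [U FU Uy]]] | nOF] := pselect (O `&` \bigcup_(U in F) U !=set0).
    by exists y; split => //; exists U => //; left.
  exists x; split => //; exists E; first by right.
  move=> clx; apply: nOF; have [y [[U FU Uy] Oy]] := clx O (open_nbhs_nbhs (conj oO Ox)).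
  by exists y; split => //; exists U.
Qed.

Lemma uncountable_open_family_meets {F : set (set X)} {K : nat -> set X} :
  dense (\bigcup_n K n) -> (forall U, F U -> open U) -> ~ countable F ->
  exists n, ~ countable [set U | F U /\ U `&` K n !=set0].
Proof.
move=> dK oF ncF; apply: contrapT => all_countable; apply: ncF.
apply: (sub_countable (B := [set set0] `|` \bigcup_n [set U | F U /\ U `&` K n !=set0])).
  apply: subset_card_le => U FU.
  have [-> | /set0P U0] := eqVneq U set0; first by left.
  have [x [Ux [n _ Knx]]] := dK U U0 (oF U FU).
  by right; exists n => //; split => //; exists x.
apply: countableU; first exact: countable1.
apply: bigcup_countable => // n _; apply: contrapT => ncn.
by apply: all_countable; exists n.
Qed.

End open_families.

Lemma countable_members_meeting_supports {T : Type} {R : nmodType} {F : set (set T)}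
    {S : set (T -> R)} :
  trivIset F id -> countable S ->
  (forall f, S f -> exists2 U, F U & forall x, f x != 0 -> U x) ->
  countable [set U | F U /\ exists2 f, S f & exists2 x, U x & f x != 0].
Proof.
move=> trivF cS suppS.
apply: (sub_countable (B := \bigcup_(f in S) [set U | F U /\ exists2 x, U x & f x != 0])).
  by apply: subset_card_le => U [FU [f Sf Uf]]; exists f.
apply: bigcup_countable => // f /suppS [V FV suppV].
apply: (sub_countable (B := [set V])); last exact: countable1.
apply: subset_card_le => U [FU [x Ux fx0]].
by apply: trivF => //; exists x; split => //; exact: suppV.
Qed.

Section suprema_in_C0.
Context {R : realType} {X : topologicalType}.
Hypotheses (hX : hausdorff_space X) (lcX : locally_compact [set: X]).

Definition bumps_below (F : set (set X)) (g : X -> R) : set (X -> R) :=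
  [set f | [/\ C0 R X f, fle R X f g & exists2 U, F U & forall x, f x != 0 -> U x]].

Lemma bumps_below_peak {F : set (set X)} {g : X -> R} {U : set X} {y : X} :
  C0 R X g -> (forall x, 0 <= g x) -> F U -> open U -> U y ->
  exists2 f, bumps_below F g f & f y = g y.
Proof.
move=> C0g g_ge0 FU oU Uy.
have yU : [set y] `<=` U by move=> _ ->.
have [phi [[cphi _] phi01 phi_y phi_out]] := C0_urysohn R hX lcX (@compact_set1 _ y) oU yU.
exists (fun x => g x * phi x); last by rewrite phi_y ?mulr1.
split.
- exact: C0_mul_unit_interval.
- by move=> x; have /andP[? ?] := phi01 x; rewrite ler_piMr.
- exists U => // x; apply: contraNP => Ux.
  by rewrite phi_out ?mulr0.
Qed.

Lemma bumps_below_neq0 {F : set (set X)} {g : X -> R} :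
  F !=set0 -> C0 R X g -> (forall x, 0 <= g x) -> bumps_below F g !=set0.
Proof.
move=> [U FU] C0g g_ge0; exists (fun _ => 0); split.
- apply: (C0_dominated _ _ C0g); first exact: cst_continuous.
  by move=> x; rewrite normr0.
- exact: g_ge0.
- by exists U => // x; rewrite eqxx.
Qed.

Lemma is_sup_C0_bumps_below {F : set (set X)} {g : X -> R} :
  (forall U, F U -> open U) -> dense (\bigcup_(U in F) U) ->
  C0 R X g -> (forall x, 0 <= g x) -> is_sup_C0 R X (bumps_below F g) g.
Proof.
move=> oF dF C0g g_ge0; split; [done | split; first by move=> f []].
move=> h [ch _] ubh x; rewrite leNgt; apply/negP => hx.
pose O := (fun y => g y - h y) @^-1` [set r : R | 0 < r].
have oO : open O.
  apply: open_comp; last exact: open_gt.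
  by move=> y _; apply: continuousB; [exact: (proj1 C0g) | exact: ch].
have Ox : O x by rewrite /O /= subr_gt0.
have [y [Oy [U FU Uy]]] := dF O (ex_intro _ x Ox) oO.
have [f Sf fy] := bumps_below_peak C0g g_ge0 FU (oF U FU) Uy.
by move: Oy; rewrite /O /= subr_gt0 -fy ltNge ubh.
Qed.

Lemma is_sup_C0_support_meets {S : set (X -> R)} {g : X -> R} {U : set X} {x0 : X} :
  is_sup_C0 R X S g -> open U -> U x0 -> 0 < g x0 ->
  exists2 f, S f & exists2 x, U x & f x != 0.
Proof.
move=> [C0g [ubg lub]] oU Ux0 gx0_gt0; apply: contrapT => S_vanish_on_U.
have x0U : [set x0] `<=` U by move=> _ ->.
have [psi [[cpsi _] psi01 psi_x0 psi_out]] := C0_urysohn R hX lcX (@compact_set1 _ x0) oU x0U.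
pose h x := g x * (1 - psi x).
have C0h : C0 R X h.
  apply: C0_mul_unit_interval => //.
    by move=> x; apply: continuousB; [exact: cst_continuous | exact: cpsi].
  by move=> x; have /andP[? ?] := psi01 x; rewrite subr_ge0 lerBlDr lerDl andbC.
have ubh : forall f, S f -> fle R X f h.
  move=> f Sf x; have [Ux | nUx] := pselect (U x); last first.
    by rewrite /h psi_out // subr0 mulr1 ubg.
  have fx0 : f x = 0.
    by apply: contrapT => /eqP fx0; apply: S_vanish_on_U; exists f => //; exists x.
  have gx_ge0 : 0 <= g x by rewrite -fx0 ubg.
  by rewrite /h fx0 mulr_ge0 // subr_ge0; case/andP: (psi01 x).
have := lub h C0h ubh x0.
by rewrite /h psi_x0 // subrr mulr0 leNgt gx0_gt0.
Qed.

End suprema_in_C0.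

Theorem proposition5p6 (R : realType) (X : topologicalType) :
  hausdorff_space X -> locally_compact [set: X] ->
  (exists D : set X, [/\ open D, dense D & sigma_compact X D]) ->
  C0_countable_sup_property R X ->
  CCC X.
Proof.
move=> hX lcX [D [_ dD [K [cptK DK]]]] csp F oF disjF; apply: contrapT => ncF.
have dK : dense (\bigcup_n K n) by rewrite -DK.
have trivF : trivIset F id.
  move=> U V FU FV [x UVx]; apply: contrapT => UV.
  by rewrite (disjF U V FU FV UV) in UVx.
have [F1 [FF1 oF1 trivF1 dF1]] := open_family_dense_extension oF trivF.
have ncF1 : ~ countable F1 by move/(sub_countable (subset_card_le FF1)).
have [n ncFn] := uncountable_open_family_meets dK oF1 ncF1.
have [g [C0g g01 g_K _]] := C0_urysohn R hX lcX (cptK n) openT (@subsetT _ (K n)).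
have g_ge0 x : 0 <= g x by case/andP: (g01 x).
have F1_neq0 : F1 !=set0.
  by apply/set0P; apply: contra_notN ncF1 => /eqP ->; exact: countable0.
have S_C0 : bumps_below F1 g `<=` C0 R X by move=> f [].
have [S' [S'S cS' supS']] := csp _ _ S_C0
  (bumps_below_neq0 F1_neq0 C0g g_ge0) (is_sup_C0_bumps_below hX lcX oF1 dF1 C0g g_ge0).
apply: ncFn; apply: (sub_countable _ (countable_members_meeting_supports trivF1 cS' _)); last first.
  by move=> f /S'S [].
apply: subset_card_le => U [F1U [x [Ux Knx]]]; split => //.
by apply: (is_sup_C0_support_meets hX lcX supS' (oF1 U F1U) Ux); rewrite g_K ?ltr01.
Qed.
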